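(* Let $k$ be a positive integer, $a\in\mathbb C\setminus\mathbb Z_0^-$, and let $s\in\mathbb C$ be arbitrary when $|z|<1$, or $\Re(s)>k$ when $|z|=1$. Then $$\Phi_k(z,s,a)=\frac1{a^s}+\sum_{r=0}^{k-1}\binom{k}{r} z^{k-r}\,\Phi_{k-r}\bigl(z,s,a+(k-r)\bigr).$$
   Context: $\mathbb Z_0^-=\{0,-1,-2,\ldots\}$. The multiple Hurwitz-Lerch zeta function of order $k$ is $\Phi_k(z,s,a)=\sum_{m_1,\ldots,m_k=0}^\infty\frac{z^{m_1+\dots+m_k}}{(m_1+\dots+m_k+a)^{s}}$ for $a\in\mathbb C\setminus\mathbb Z_0^-$, with $s\in\mathbb C$ when $|z|<1$ and $\Re(s)>k$ when $|z|=1$. *)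

From Stdlib Require Import Reals.
From Coquelicot Require Import Coquelicot.
Open Scope C_scope.

Fixpoint csum (N : nat) (f : nat -> C) : C :=
  match N with
  | O => 0
  | S n => csum n f + f n
  end.

(* Principal argument in (-PI, PI] (junk value at 0). *)
Definition Carg (w : C) : R :=
  if Rle_dec 0 (Im w) then acos (Re w / Cmod w) else (- acos (Re w / Cmod w))%R.

Definition Clog (w : C) : C := (ln (Cmod w), Carg w).

Definition Cexp (w : C) : C := (exp (Re w) * cos (Im w), exp (Re w) * sin (Im w))%R.

Definition Cpowc (w s : C) : C := Cexp (s * Clog w).

Definition Clim (u : nat -> C) : C :=
  (real (Lim_seq (fun N => Re (u N))), real (Lim_seq (fun N => Im (u N)))).

(* boxsum k N g = sum over (m_1,...,m_k) in {0,...,N-1}^k of g (m_1+...+m_k). *)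
Fixpoint boxsum (k N : nat) (g : nat -> C) : C :=
  match k with
  | O => g O
  | S k' => csum N (fun m => boxsum k' N (fun t => g (m + t)%nat))
  end.

(* Multiple Hurwitz-Lerch zeta function of order k:
   sum_{m_1,...,m_k >= 0} z^(m_1+...+m_k) / (m_1+...+m_k+a)^s,
   as the limit of the partial sums over the boxes {0,...,N-1}^k. *)
Definition Phi (k : nat) (z s a : C) : C :=
  Clim (fun N => boxsum k N (fun n => Cpow z n / Cpowc (RtoC (INR n) + a) s)).

(* Split every index of the box {0, ..., N}^k according to whether it is 0: grouping the
   indices that are not, and shifting them down by one, turns the box of side N + 1 in
   dimension k into sum_j C(k, j) z^j times the j-dimensional box of side N with [a]
   replaced by [a + j]. So the recurrence already holds for the partial sums, and it passes
   to the limit because every Phi_j, j <= k, converges. For convergence the term is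
   dominated by K |z|^n (n + 1)^(-Re s); box sums of such majorants are bounded by powers of
   a one-dimensional sum, which is finite by the ratio test when |z| < 1, and by comparison
   with sum (m + 1)^(-p), p = Re s / k > 1, when |z| = 1. *)

From Stdlib Require Import Reals Lia Lra Binomial.
From Coquelicot Require Import Coquelicot.
Open Scope C_scope.

Lemma csum_ext n f g : (forall i, (i < n)%nat -> f i = g i) -> csum n f = csum n g.
Proof.
  induction n as [|n IH]; intros H; simpl; [reflexivity|].
  f_equal; [apply IH; intros; apply H | apply H]; lia.
Qed.

Lemma csum_add n f g : csum n (fun i => f i + g i) = csum n f + csum n g.
Proof. induction n as [|n IH]; simpl; [ring | rewrite IH; ring]. Qed.

Lemma csum_sub n f g : csum n (fun i => f i - g i) = csum n f - csum n g.
Proof. induction n as [|n IH]; simpl; [ring | rewrite IH; ring]. Qed.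

Lemma csum_mult_l n c f : csum n (fun i => c * f i) = c * csum n f.
Proof. induction n as [|n IH]; simpl; [ring | rewrite IH; ring]. Qed.

Lemma csum_succ_l n f : csum (S n) f = f O + csum n (fun i => f (S i)).
Proof.
  induction n as [|n IH]; [simpl; ring|].
  change (csum (S (S n)) f) with (csum (S n) f + f (S n)).
  rewrite IH; simpl; ring.
Qed.

Lemma csum_comm n p F :
  csum n (fun m => csum p (F m)) = csum p (fun j => csum n (fun m => F m j)).
Proof.
  induction n as [|n IH]; simpl.
  - induction p as [|p IHp]; simpl; [reflexivity | rewrite <- IHp; ring].
  - rewrite IH, <- csum_add; reflexivity.
Qed.

Lemma csum_rev n f : csum n f = csum n (fun i => f (n - 1 - i)%nat).
Proof.
  induction n as [|n IH]; [reflexivity|].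
  rewrite (csum_succ_l n (fun i => f (S n - 1 - i)%nat)).
  change (csum (S n) f) with (csum n f + f n).
  rewrite IH, Nat.sub_0_r, Nat.sub_succ, Nat.sub_0_r, Cplus_comm.
  f_equal; apply csum_ext; intros; f_equal; lia.
Qed.

Lemma csum_succ_l_rev n f : csum (S n) f = f O + csum n (fun r => f (n - r)%nat).
Proof.
  rewrite csum_succ_l, csum_rev; f_equal.
  apply csum_ext; intros; f_equal; lia.
Qed.

Lemma csum_binomial_pascal k (X : nat -> C) :
  csum (S k) (fun j => RtoC (Binomial.C k j) * X j)
  + csum (S k) (fun j => RtoC (Binomial.C k j) * X (S j))
  = csum (S (S k)) (fun j => RtoC (Binomial.C (S k) j) * X j).
Proof.
  rewrite (csum_succ_l k), (csum_succ_l (S k)).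
  change (csum (S k) (fun j => RtoC (Binomial.C k j) * X (S j))) with
    (csum k (fun j => RtoC (Binomial.C k j) * X (S j)) + RtoC (Binomial.C k k) * X (S k)).
  change (csum (S k) (fun i => RtoC (Binomial.C (S k) (S i)) * X (S i))) with
    (csum k (fun i => RtoC (Binomial.C (S k) (S i)) * X (S i))
     + RtoC (Binomial.C (S k) (S k)) * X (S k)).
  rewrite !C_n_0, !C_n_n.
  rewrite (csum_ext k (fun i => RtoC (Binomial.C (S k) (S i)) * X (S i))
    (fun i => RtoC (Binomial.C k (S i)) * X (S i) + RtoC (Binomial.C k i) * X (S i))).
  - rewrite csum_add; ring.
  - intros i Hi; rewrite <- pascal, RtoC_plus by lia; ring.
Qed.

Lemma boxsum_ext k N g h : (forall t, g t = h t) -> boxsum k N g = boxsum k N h.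
Proof.
  revert g h; induction k as [|k IH]; intros g h H; simpl; auto.
  apply csum_ext; intros; apply IH; auto.
Qed.

Lemma boxsum_mult_l k N c g : boxsum k N (fun t => c * g t) = c * boxsum k N g.
Proof.
  revert g; induction k as [|k IH]; intros g; simpl; auto.
  rewrite <- csum_mult_l; apply csum_ext; intros; apply IH.
Qed.

(* Peeling off the value 0 of the first index: m = 0 keeps the dimension, m = S m' shifts the
   argument by one; Pascal's rule then merges the two binomial expansions. *)
Lemma boxsum_succ_binomial k N g :
  boxsum k (S N) g
  = csum (S k) (fun j => RtoC (Binomial.C k j) * boxsum j N (fun t => g (t + j)%nat)).
Proof.
  revert g; induction k as [|k IH]; intros g.
  - simpl; rewrite C_n_0; ring.
  - change (boxsum (S k) (S N) g)
      with (csum (S N) (fun m => boxsum k (S N) (fun t => g (m + t)%nat))).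
    rewrite csum_succ_l, IH.
    rewrite (csum_ext N _ (fun m => csum (S k) (fun j => RtoC (Binomial.C k j) *
               boxsum j N (fun t => g (S m + (t + j))%nat)))) by (intros; apply IH).
    rewrite csum_comm.
    rewrite (csum_ext (S k) (fun j => csum N _)
      (fun j => RtoC (Binomial.C k j) * boxsum (S j) N (fun t => g (t + S j)%nat))).
    + exact (csum_binomial_pascal k (fun j => boxsum j N (fun t => g (t + j)%nat))).
    + intros j _; simpl; rewrite <- csum_mult_l.
      apply csum_ext; intros m _; f_equal.
      apply boxsum_ext; intros t; f_equal; lia.
Qed.

Definition hlerch_term (z s a : C) (n : nat) : C := Cpow z n / Cpowc (RtoC (INR n) + a) s.

Lemma hlerch_term_shift z s a j t :
  hlerch_term z s a (t + j) = Cpow z j * hlerch_term z s (a + RtoC (INR j)) t.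
Proof.
  unfold hlerch_term; rewrite Cpow_add_r.
  replace (RtoC (INR (t + j)) + a) with (RtoC (INR t) + (a + RtoC (INR j))).
  - unfold Cdiv; ring.
  - rewrite plus_INR, RtoC_plus; ring.
Qed.

Lemma boxsum_hlerch_succ k N z s a :
  boxsum k (S N) (hlerch_term z s a)
  = 1 / Cpowc a s
    + csum k (fun r => RtoC (Binomial.C k r) * Cpow z (k - r)
                       * boxsum (k - r) N (hlerch_term z s (a + RtoC (INR (k - r))))).
Proof.
  rewrite boxsum_succ_binomial, csum_succ_l_rev; f_equal.
  - rewrite C_n_0; simpl; unfold hlerch_term; simpl.
    replace (RtoC 0 + a) with a by ring; unfold Cdiv; ring.
  - apply csum_ext; intros r Hr.
    rewrite <- pascal_step1 by lia.
    rewrite <- Cmult_assoc, <- (boxsum_mult_l _ _ (Cpow z _)); f_equal.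
    apply boxsum_ext; intros t; apply hlerch_term_shift.
Qed.

Open Scope R_scope.

Fixpoint rsum (N : nat) (f : nat -> R) : R :=
  match N with
  | O => 0
  | S n => rsum n f + f n
  end.

Fixpoint rboxsum (k N : nat) (g : nat -> R) : R :=
  match k with
  | O => g O
  | S k' => rsum N (fun m => rboxsum k' N (fun t => g (m + t)%nat))
  end.

Lemma rsum_le n f g : (forall i, (i < n)%nat -> f i <= g i) -> rsum n f <= rsum n g.
Proof.
  induction n as [|n IH]; intros H; simpl; [lra|].
  apply Rplus_le_compat; [apply IH; intros|]; apply H; lia.
Qed.

Lemma rsum_mult_l n c f : rsum n (fun i => c * f i) = c * rsum n f.
Proof. induction n as [|n IH]; simpl; [ring | rewrite IH; ring]. Qed.

Lemma rsum_sub n f g : rsum n (fun i => f i - g i) = rsum n f - rsum n g.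
Proof. induction n as [|n IH]; simpl; [ring | rewrite IH; ring]. Qed.

Lemma rsum_add_range n d f : rsum (n + d) f = rsum n f + rsum d (fun i => f (n + i)%nat).
Proof.
  induction d as [|d IH]; simpl; [rewrite Nat.add_0_r; ring|].
  rewrite Nat.add_succ_r; simpl; rewrite IH; ring.
Qed.

Lemma rsum_le_nondecr (u : nat -> R) n m :
  (forall i, 0 <= u i) -> (n <= m)%nat -> rsum n u <= rsum m u.
Proof. intros Hu H; induction H as [|m _ IH]; simpl; [lra | specialize (Hu m); lra]. Qed.

Lemma Cmod_csum n f : Cmod (csum n f) <= rsum n (fun i => Cmod (f i)).
Proof.
  induction n as [|n IH]; simpl; [rewrite Cmod_0; lra|].
  eapply Rle_trans; [apply Cmod_triangle | lra].
Qed.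

Lemma Cmod_boxsum_le k N g h :
  (forall n, Cmod (g n) <= h n) -> Cmod (boxsum k N g) <= rboxsum k N h.
Proof.
  revert g h; induction k as [|k IH]; intros g h Hgh; simpl; auto.
  eapply Rle_trans; [apply Cmod_csum | apply rsum_le; intros; apply IH; auto].
Qed.

Lemma Cmod_boxsum_succ_sub_le k N g h : (forall n, Cmod (g n) <= h n) ->
  Cmod (boxsum k (S N) g - boxsum k N g) <= rboxsum k (S N) h - rboxsum k N h.
Proof.
  revert g h; induction k as [|k IH]; intros g h Hgh; simpl.
  - replace (g O - g O)%C with (RtoC 0) by ring; rewrite Cmod_0; lra.
  - pose (gm := fun M m => boxsum k M (fun t => g (m + t)%nat)).
    pose (hm := fun M m => rboxsum k M (fun t => h (m + t)%nat)).
    change (Cmod (csum N (gm (S N)) + gm (S N) N - csum N (gm N))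
            <= rsum N (hm (S N)) + hm (S N) N - rsum N (hm N)).
    replace (csum N (gm (S N)) + gm (S N) N - csum N (gm N))%C
      with (csum N (fun m => gm (S N) m - gm N m) + gm (S N) N)%C
      by (rewrite csum_sub; ring).
    assert (Hsum : rsum N (fun m => Cmod (gm (S N) m - gm N m)%C)
                   <= rsum N (hm (S N)) - rsum N (hm N)).
    { rewrite <- rsum_sub; apply rsum_le; intros; apply IH; auto. }
    assert (Hlast : Cmod (gm (S N) N) <= hm (S N) N) by (apply Cmod_boxsum_le; auto).
    generalize (Cmod_csum N (fun m => gm (S N) m - gm N m)%C).
    generalize (Cmod_triangle (csum N (fun m => gm (S N) m - gm N m)%C) (gm (S N) N)).
    lra.
Qed.

(* [w j] majorizes the [j]-fold box sums: the hypothesis on [w] lets one summation index be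
   peeled off at a time, each contributing a factor [U]. *)
Lemma rboxsum_le_weighted k (u : nat -> R) U (w : nat -> nat -> R) :
  (forall m, 0 <= u m) -> (forall N, rsum N u <= U) ->
  (forall j m t, w (S j) (m + t)%nat <= u m * w j t) -> w O O <= 1 ->
  forall N c h, 0 <= c -> (forall t, h t <= c * w k t) -> rboxsum k N h <= c * U ^ k.
Proof.
  intros Hu HU Hw Hw0 N.
  assert (HU0 : 0 <= U) by apply (HU O).
  induction k as [|k IH]; intros c h Hc Hh; simpl.
  - specialize (Hh O); nra.
  - apply Rle_trans with (rsum N (fun m => (c * U ^ k) * u m)).
    + apply rsum_le; intros m _.
      apply Rle_trans with ((c * u m) * U ^ k); [|lra].
      apply IH; [specialize (Hu m); nra|].
      intros t; eapply Rle_trans; [apply Hh|].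
      rewrite Rmult_assoc; apply Rmult_le_compat_l; auto.
    + rewrite rsum_mult_l.
      assert (0 <= c * U ^ k) by (apply Rmult_le_pos; auto; apply pow_le; auto).
      specialize (HU N); nra.
Qed.

Definition is_lim_Cseq (u : nat -> C) (l : C) : Prop :=
  is_lim_seq (fun N => Re (u N)) (Re l) /\ is_lim_seq (fun N => Im (u N)) (Im l).

Lemma im_le_Cmod c : Rabs (Im c) <= Cmod c.
Proof.
  destruct c as [a b]; unfold Cmod; simpl.
  rewrite <- sqrt_Rsqr_abs; apply sqrt_le_1_alt; unfold Rsqr; nra.
Qed.

(* [x + v] and [v] are nondecreasing and bounded, so [x] is their difference of limits. *)
Lemma ex_lim_seq_dominated_increments (x v : nat -> R) B :
  (forall N, Rabs (x N) <= v N) -> (forall N, Rabs (x (S N) - x N) <= v (S N) - v N) ->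
  (forall N, v N <= B) -> exists l : R, is_lim_seq x l.
Proof.
  intros Hx Hinc HB.
  destruct (ex_finite_lim_seq_incr v B) as [l1 H1]; auto.
  { intros N; generalize (Hinc N) (Rabs_pos (x (S N) - x N)); lra. }
  destruct (ex_finite_lim_seq_incr (fun N => x N + v N) (2 * B)) as [l2 H2].
  - intros N; generalize (Hinc N); intros H; apply Rabs_le_between in H; lra.
  - intros N; generalize (Hx N) (HB N); intros H ?; apply Rabs_le_between in H; lra.
  - exists (l2 - l1).
    eapply is_lim_seq_ext; [|apply (is_lim_seq_minus' _ _ _ _ H2 H1)].
    intros N; simpl; ring.
Qed.

Lemma boxsum_cvg k g h B :
  (forall n, Cmod (g n) <= h n) -> (forall N, rboxsum k N h <= B) ->
  exists l, is_lim_Cseq (fun N => boxsum k N g) l.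
Proof.
  intros Hgh HB.
  assert (Hcomp : forall f : C -> R, (forall c, Rabs (f c) <= Cmod c) ->
            (forall c d, f (c - d)%C = f c - f d) ->
            exists l : R, is_lim_seq (fun N => f (boxsum k N g)) l).
  { intros f Hf Hsub.
    apply (ex_lim_seq_dominated_increments _ (fun N => rboxsum k N h) B); auto.
    - intros N; eapply Rle_trans; [apply Hf | apply Cmod_boxsum_le; auto].
    - intros N; rewrite <- Hsub.
      eapply Rle_trans; [apply Hf | apply Cmod_boxsum_succ_sub_le; auto]. }
  destruct (Hcomp Re re_le_Cmod) as [l1 H1]; [intros [] []; simpl; ring|].
  destruct (Hcomp Im im_le_Cmod) as [l2 H2]; [intros [] []; simpl; ring|].
  exists (l1, l2); split; auto.
Qed.

Lemma is_lim_Cseq_Clim u l : is_lim_Cseq u l -> Clim u = l.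
Proof.
  intros [H1 H2]; unfold Clim.
  rewrite (is_lim_seq_unique _ _ H1), (is_lim_seq_unique _ _ H2).
  destruct l; reflexivity.
Qed.

Lemma is_lim_Cseq_incr_1 u l : is_lim_Cseq (fun N => u (S N)) l -> is_lim_Cseq u l.
Proof. intros [H1 H2]; split; apply is_lim_seq_incr_1; auto. Qed.

Lemma is_lim_Cseq_ext u v l : (forall N, u N = v N) -> is_lim_Cseq u l -> is_lim_Cseq v l.
Proof.
  intros E [H1 H2]; split; eapply is_lim_seq_ext; eauto; intros; simpl; rewrite E; auto.
Qed.

Lemma is_lim_Cseq_const c : is_lim_Cseq (fun _ => c) c.
Proof. split; apply is_lim_seq_const. Qed.

Lemma is_lim_Cseq_plus u v l1 l2 :
  is_lim_Cseq u l1 -> is_lim_Cseq v l2 -> is_lim_Cseq (fun N => u N + v N)%C (l1 + l2)%C.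
Proof.
  intros [H1 H2] [H3 H4]; split; simpl.
  - apply (is_lim_seq_plus' _ _ _ _ H1 H3).
  - apply (is_lim_seq_plus' _ _ _ _ H2 H4).
Qed.

Lemma is_lim_Cseq_scal_l c u l :
  is_lim_Cseq u l -> is_lim_Cseq (fun N => c * u N)%C (c * l)%C.
Proof.
  intros [H1 H2]; split; simpl.
  - apply is_lim_seq_minus'; apply is_lim_seq_mult'; auto; apply is_lim_seq_const.
  - apply is_lim_seq_plus'; apply is_lim_seq_mult'; auto; apply is_lim_seq_const.
Qed.

Lemma is_lim_Cseq_csum n (U : nat -> nat -> C) L :
  (forall i, (i < n)%nat -> is_lim_Cseq (U i) (L i)) ->
  is_lim_Cseq (fun N => csum n (fun i => U i N)) (csum n L).
Proof.
  induction n as [|n IH]; intros H; simpl; [apply is_lim_Cseq_const|].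
  apply is_lim_Cseq_plus; [apply IH; intros|]; apply H; lia.
Qed.

Lemma exp_le_compat x y : x <= y -> exp x <= exp y.
Proof. intros [H|H]; [left; apply exp_increasing; auto | subst; lra]. Qed.

Lemma Rpower_1_l e : Rpower 1 e = 1.
Proof. unfold Rpower; rewrite ln_1, Rmult_0_r; apply exp_0. Qed.

Lemma Rpower_le_l_nonpos x y e : e <= 0 -> 0 < x <= y -> Rpower y e <= Rpower x e.
Proof.
  intros He Hxy; unfold Rpower; apply exp_le_compat.
  assert (ln x <= ln y) by (apply ln_le; lra); nra.
Qed.

Lemma Cmod_Cexp v : Cmod (Cexp v) = exp (Re v).
Proof.
  unfold Cexp, Cmod; simpl.
  transitivity (sqrt (exp (Re v) ^ 2)); [f_equal | apply sqrt_pow2; left; apply exp_pos].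
  generalize (sin2_cos2 (Im v)); unfold Rsqr; intros H.
  transitivity (exp (Re v) ^ 2 * (sin (Im v) * sin (Im v) + cos (Im v) * cos (Im v)));
    [ring | rewrite H; ring].
Qed.

Lemma Cmod_Cpowc w s : Cmod (Cpowc w s) = exp (Re s * ln (Cmod w) - Im s * Carg w).
Proof. unfold Cpowc; rewrite Cmod_Cexp; destruct s; simpl; ring_simplify; reflexivity. Qed.

Lemma Cpowc_neq_0 w s : Cpowc w s <> RtoC 0.
Proof.
  intros H; generalize (exp_pos (Re s * ln (Cmod w) - Im s * Carg w)).
  rewrite <- Cmod_Cpowc, H, Cmod_0; lra.
Qed.

Lemma Carg_bound w : Rabs (Carg w) <= PI.
Proof.
  unfold Carg; destruct (Rle_dec 0 (Im w)), (acos_bound (Re w / Cmod w));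
    rewrite ?Rabs_Ropp, Rabs_right; lra.
Qed.

Lemma finite_pos_lower_bound T (f : nat -> R) :
  (forall t, 0 < f t) -> exists d, 0 < d /\ forall t, (t < T)%nat -> d <= f t.
Proof.
  intros Hf; induction T as [|T [d [Hd H]]].
  - exists 1; split; [lra | intros; lia].
  - exists (Rmin d (f T)); split; [apply Rmin_pos; auto|].
    intros t Ht; destruct (Nat.eq_dec t T) as [->|Hne]; [apply Rmin_r|].
    eapply Rle_trans; [apply Rmin_l | apply H; lia].
Qed.

Section ShiftedNaturals.

Variable b : C.
Hypothesis Hb : forall n : nat, b <> RtoC (- INR n).

Lemma Cmod_nat_add_pos t : 0 < Cmod (RtoC (INR t) + b).
Proof.
  apply Cmod_gt_0; intros H; apply (Hb t).
  apply injective_projections; simpl;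
    [apply (f_equal fst) in H | apply (f_equal snd) in H]; simpl in H; lra.
Qed.

Lemma Cmod_nat_add_upper t : Cmod (RtoC (INR t) + b) <= (1 + Cmod b) * (INR t + 1).
Proof.
  eapply Rle_trans; [apply Cmod_triangle|].
  rewrite Cmod_R, Rabs_right by (apply Rle_ge, pos_INR).
  generalize (pos_INR t) (Cmod_ge_0 b); nra.
Qed.

(* Beyond [t >= 2 |b| + 1] the ratio is at least [1/2]; below, it is a finite minimum of
   positive numbers. *)
Lemma Cmod_nat_add_lower :
  exists d, 0 < d /\ forall t, d * (INR t + 1) <= Cmod (RtoC (INR t) + b).
Proof.
  destruct (INR_archimed 1 (2 * Cmod b + 1)) as [T HT]; [lra|].
  destruct (finite_pos_lower_bound T (fun t => Cmod (RtoC (INR t) + b) / (INR t + 1)))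
    as [d [Hd H]].
  { intros t; apply Rdiv_lt_0_compat; [apply Cmod_nat_add_pos | generalize (pos_INR t); lra]. }
  exists (Rmin d (1 / 2)); split; [apply Rmin_pos; lra|].
  intros t; assert (Ht0 : 0 <= INR t) by apply pos_INR.
  destruct (Nat.lt_ge_cases t T) as [Ht | Ht].
  - specialize (H t Ht); simpl in H.
    apply Rle_trans with (d * (INR t + 1)); [apply Rmult_le_compat_r; [lra | apply Rmin_l]|].
    apply Rmult_le_reg_r with (/ (INR t + 1)); [apply Rinv_0_lt_compat; lra|].
    rewrite Rmult_assoc, Rinv_r by lra; unfold Rdiv in H; lra.
  - apply le_INR in Ht.
    assert (Cmod (RtoC (INR t)) <= Cmod (RtoC (INR t) + b) + Cmod b).
    { replace (RtoC (INR t)) with ((RtoC (INR t) + b) + - b)%C at 1 by ring.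
      rewrite <- (Cmod_opp b); apply Cmod_triangle. }
    rewrite Cmod_R, Rabs_right in H0 by lra.
    apply Rle_trans with (1 / 2 * (INR t + 1)); [apply Rmult_le_compat_r; [lra | apply Rmin_r] | lra].
Qed.

Lemma ln_Cmod_nat_add_bounded :
  exists D, forall t, Rabs (ln (Cmod (RtoC (INR t) + b)) - ln (INR t + 1)) <= D.
Proof.
  destruct Cmod_nat_add_lower as [d [Hd H]].
  exists (Rabs (ln d) + Rabs (ln (1 + Cmod b))); intros t.
  generalize (pos_INR t) (Cmod_ge_0 b) (Cmod_nat_add_pos t); intros Ht Hb0 Hpos.
  assert (L1 : ln (d * (INR t + 1)) <= ln (Cmod (RtoC (INR t) + b)))
    by (apply ln_le; auto; nra).
  assert (L2 : ln (Cmod (RtoC (INR t) + b)) <= ln ((1 + Cmod b) * (INR t + 1)))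
    by (apply ln_le; auto; apply Cmod_nat_add_upper).
  rewrite ln_mult in L1, L2 by lra.
  generalize (Rle_abs (- ln d)) (Rle_abs (ln (1 + Cmod b))) (Rabs_pos (ln d))
    (Rabs_pos (ln (1 + Cmod b))); rewrite Rabs_Ropp; intros.
  apply Rabs_le_between; lra.
Qed.

(* [|w^s| = |w|^(Re s) e^(- Im s arg w)], and the argument is bounded by [PI]. *)
Lemma hlerch_term_bound z s :
  exists K, 0 <= K /\ forall t,
    Cmod (hlerch_term z s b t) <= K * (Cmod z ^ t * Rpower (INR t + 1) (- Re s)).
Proof.
  destruct ln_Cmod_nat_add_bounded as [D HD].
  exists (exp (Rabs (Re s) * D + Rabs (Im s) * PI)); split; [left; apply exp_pos|].
  intros t; unfold hlerch_term.
  rewrite Cmod_div by apply Cpowc_neq_0.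
  rewrite Cmod_pow, Cmod_Cpowc; unfold Rdiv, Rpower; rewrite <- exp_Ropp.
  set (w := (RtoC (INR t) + b)%C).
  assert (E : exp (- (Re s * ln (Cmod w) - Im s * Carg w))
              <= exp (Rabs (Re s) * D + Rabs (Im s) * PI) * exp (- Re s * ln (INR t + 1))).
  { rewrite <- exp_plus; apply exp_le_compat.
    specialize (HD t); fold w in HD.
    assert (- Re s * (ln (Cmod w) - ln (INR t + 1)) <= Rabs (Re s) * D).
    { eapply Rle_trans; [apply Rle_abs|]; rewrite Rabs_mult, Rabs_Ropp.
      apply Rmult_le_compat_l; auto; apply Rabs_pos. }
    assert (Im s * Carg w <= Rabs (Im s) * PI).
    { eapply Rle_trans; [apply Rle_abs|]; rewrite Rabs_mult.
      apply Rmult_le_compat_l; [apply Rabs_pos | apply Carg_bound]. }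
    nra. }
  assert (0 <= Cmod z ^ t) by (apply pow_le, Cmod_ge_0).
  apply Rmult_le_compat_l with (r := Cmod z ^ t) in E; auto; lra.
Qed.

End ShiftedNaturals.

Lemma ln_le_sub_1 y : 0 < y -> ln y <= y - 1.
Proof. intros Hy; generalize (exp_ineq1_le (ln y)); rewrite exp_ln; lra. Qed.

Lemma ln_sub_le x y : 0 < x -> 0 < y -> ln y - ln x <= y / x - 1.
Proof.
  intros Hx Hy; rewrite <- ln_div by auto.
  apply ln_le_sub_1, Rdiv_lt_0_compat; auto.
Qed.

Lemma rsum_geom_le n q : 0 <= q < 1 -> rsum n (fun i => q ^ i) <= 1 / (1 - q).
Proof.
  intros Hq.
  assert (E : rsum n (fun i => q ^ i) * (1 - q) = 1 - q ^ n).
  { induction n as [|n IH]; simpl; [ring | rewrite Rmult_plus_distr_r, IH; ring]. }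
  assert (0 <= q ^ n) by (apply pow_le; lra).
  apply Rmult_le_reg_r with (1 - q); [lra|].
  rewrite E; unfold Rdiv; rewrite Rmult_assoc, Rinv_l; lra.
Qed.

Lemma rsum_bounded_of_ratio (u : nat -> R) q M :
  (forall m, 0 <= u m) -> 0 <= q < 1 -> (forall m, (M <= m)%nat -> u (S m) <= q * u m) ->
  exists U, forall N, rsum N u <= U.
Proof.
  intros Hu Hq Hr.
  assert (Hgeom : forall i, u (M + i)%nat <= u M * q ^ i).
  { induction i as [|i IH]; simpl; [rewrite Nat.add_0_r; lra|].
    rewrite Nat.add_succ_r; eapply Rle_trans; [apply Hr; lia | nra]. }
  exists (rsum M u + u M * (1 / (1 - q))); intros N.
  apply Rle_trans with (rsum (M + N) u); [apply rsum_le_nondecr; auto; lia|].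
  rewrite rsum_add_range; apply Rplus_le_compat_l.
  apply Rle_trans with (rsum N (fun i => u M * q ^ i)); [apply rsum_le; auto|].
  rewrite rsum_mult_l; apply Rmult_le_compat_l; auto; apply rsum_geom_le; auto.
Qed.

Lemma rsum_pow_Rpower_bounded r P : 0 <= r < 1 -> 0 <= P ->
  exists U, forall N, rsum N (fun m => r ^ m * Rpower (INR m + 1) P) <= U.
Proof.
  intros Hr HP.
  assert (Hu : forall m, 0 <= r ^ m * Rpower (INR m + 1) P).
  { intros; apply Rmult_le_pos; [apply pow_le; lra | left; apply exp_pos]. }
  destruct (Req_dec r 0) as [->|Hr0].
  { apply (rsum_bounded_of_ratio _ 0 0); auto; intros; simpl; lra. }
  assert (Lr : ln r < 0) by (rewrite <- ln_1; apply ln_increasing; lra).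
  set (e := - ln r / 2).
  destruct (INR_archimed e P) as [M HM]; [unfold e; lra|].
  (* For [m >= M], [((m + 2) / (m + 1))^P <= exp (P / (m + 1)) <= exp e = r^(-1/2)]. *)
  apply (rsum_bounded_of_ratio _ (r * exp e) M); auto.
  - split; [apply Rmult_le_pos; [lra | left; apply exp_pos]|].
    replace (r * exp e) with (exp (ln r / 2)).
    + rewrite <- exp_0; apply exp_increasing; lra.
    + unfold e; rewrite <- (exp_ln r) at 2 by lra; rewrite <- exp_plus; f_equal; field.
  - intros m Hm; apply le_INR in Hm.
    generalize (pos_INR m); intros Hm0.
    rewrite S_INR; simpl; unfold Rpower.
    assert (Hl : ln (INR m + 1 + 1) <= ln (INR m + 1) + / (INR m + 1)).
    { generalize (ln_sub_le (INR m + 1) (INR m + 1 + 1) ltac:(lra) ltac:(lra)).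
      replace ((INR m + 1 + 1) / (INR m + 1) - 1) with (/ (INR m + 1)) by (field; lra).
      lra. }
    assert (HPe : P * / (INR m + 1) <= e).
    { apply Rmult_le_reg_r with (INR m + 1); [lra|].
      rewrite Rmult_assoc, Rinv_l by lra.
      assert (0 < e) by (unfold e; lra).
      assert (e * INR M <= e * INR m) by (apply Rmult_le_compat_l; lra); nra. }
    assert (exp (P * ln (INR m + 1 + 1)) <= exp (P * ln (INR m + 1)) * exp e).
    { rewrite <- exp_plus; apply exp_le_compat; nra. }
    assert (0 <= r ^ m) by (apply pow_le; lra).
    assert (0 <= r * r ^ m) by nra; nra.
Qed.

(* Comparison with the integral of [x^(-p)] on [[x, x + 1]]. *)
Lemma Rpower_neg_le_telescope p x : 1 < p -> 0 < x ->
  (p - 1) * Rpower (x + 1) (- p) <= Rpower x (1 - p) - Rpower (x + 1) (1 - p).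
Proof.
  intros Hp Hx; unfold Rpower.
  set (l := ln (x + 1)); set (l0 := ln x).
  assert (H1 : l0 - l <= - / (x + 1)).
  { unfold l, l0; generalize (ln_sub_le (x + 1) x ltac:(lra) Hx).
    replace (x / (x + 1) - 1) with (- / (x + 1)) by (field; lra); auto. }
  assert (E : exp ((1 - p) * l0) = exp ((1 - p) * l) * exp ((1 - p) * (l0 - l)))
    by (rewrite <- exp_plus; f_equal; ring).
  assert (H2 : (p - 1) * / (x + 1) <= (1 - p) * (l0 - l)) by nra.
  generalize (exp_ineq1_le ((1 - p) * (l0 - l))); intros H3.
  assert (E2 : exp (- p * l) = exp ((1 - p) * l) * / (x + 1)).
  { replace (- p * l) with ((1 - p) * l + - l) by ring.
    rewrite exp_plus, exp_Ropp; unfold l; rewrite exp_ln by lra; reflexivity. }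
  rewrite E, E2; generalize (exp_pos ((1 - p) * l)); nra.
Qed.

Lemma rsum_Rpower_neg_le p N : 1 < p ->
  rsum N (fun m => Rpower (INR m + 1) (- p)) <= 1 + 1 / (p - 1).
Proof.
  intros Hp.
  assert (H : forall N, rsum (S N) (fun m => Rpower (INR m + 1) (- p))
                        <= 1 + (1 - Rpower (INR N + 1) (1 - p)) / (p - 1)).
  { induction N0 as [|N0 IH].
    - simpl; rewrite Rplus_0_l, Rplus_0_l, !Rpower_1_l; unfold Rdiv; lra.
    - change (rsum (S (S N0)) (fun m => Rpower (INR m + 1) (- p))) with
        (rsum (S N0) (fun m => Rpower (INR m + 1) (- p)) + Rpower (INR (S N0) + 1) (- p)).
      generalize (Rpower_neg_le_telescope p (INR N0 + 1) Hp
                    ltac:(generalize (pos_INR N0); lra)); intros Hs.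
      rewrite S_INR.
      apply Rle_trans with (1 + (1 - Rpower (INR N0 + 1) (1 - p)) / (p - 1) +
        (Rpower (INR N0 + 1) (1 - p) - Rpower (INR N0 + 1 + 1) (1 - p)) / (p - 1)).
      + apply Rplus_le_compat; auto.
        apply Rmult_le_reg_l with (p - 1); [lra|]; unfold Rdiv; field_simplify; lra.
      + apply Req_le; field; lra. }
  destruct N as [|N]; simpl.
  - assert (0 < 1 / (p - 1)) by (apply Rdiv_lt_0_compat; lra); lra.
  - eapply Rle_trans; [apply H|].
    generalize (exp_pos ((1 - p) * ln (INR N + 1))); intros.
    assert (0 < / (p - 1)) by (apply Rinv_0_lt_compat; lra).
    unfold Rdiv, Rpower; nra.
Qed.

Section Convergence.

Variables (z s b : C).
Hypothesis Hb : forall n : nat, b <> RtoC (- INR n).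

Lemma boxsum_hlerch_cvg_disc j : Cmod z < 1 ->
  exists l, is_lim_Cseq (fun N => boxsum j N (hlerch_term z s b)) l.
Proof.
  intros Hz.
  destruct (hlerch_term_bound b Hb z s) as [K [HK Hg]].
  set (P := Rabs (Re s)).
  set (u := fun m => Cmod z ^ m * Rpower (INR m + 1) P).
  assert (Hz0 : 0 <= Cmod z) by apply Cmod_ge_0.
  destruct (rsum_pow_Rpower_bounded (Cmod z) P) as [U HU]; [lra | apply Rabs_pos|].
  apply (boxsum_cvg j _ _ (K * U ^ j) Hg); intros N.
  apply (rboxsum_le_weighted j u U (fun _ => u)); auto.
  - intros m; apply Rmult_le_pos; [apply pow_le; lra | left; apply exp_pos].
  - intros _ m t; unfold u.
    generalize (pos_INR m) (pos_INR t); intros Hm Ht.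
    rewrite pow_add.
    apply Rle_trans with
      (Cmod z ^ m * Cmod z ^ t * (Rpower (INR m + 1) P * Rpower (INR t + 1) P));
      [|right; ring].
    apply Rmult_le_compat_l; [apply Rmult_le_pos; apply pow_le; lra|].
    rewrite Rpower_mult_distr by lra; apply Rle_Rpower_l; [apply Rabs_pos|].
    rewrite plus_INR; nra.
  - unfold u; simpl; rewrite Rplus_0_l, Rpower_1_l; lra.
  - intros t; apply Rmult_le_compat_l; auto; unfold u.
    apply Rmult_le_compat_l; [apply pow_le; lra|].
    apply Rle_Rpower; [generalize (pos_INR t); lra|].
    unfold P; rewrite <- Rabs_Ropp; apply Rle_abs.
Qed.

(* With [p = Re s / k], each of the [j <= k] indices contributes a factor
   [(m_i + 1)^(-p)], since [m_1 + ... + m_j + 1 >= m_i + 1]. *)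
Lemma boxsum_hlerch_cvg_circle j p : Cmod z = 1 -> 1 < p -> INR j * p <= Re s ->
  exists l, is_lim_Cseq (fun N => boxsum j N (hlerch_term z s b)) l.
Proof.
  intros Hz Hp Hjp.
  destruct (hlerch_term_bound b Hb z s) as [K [HK Hg]].
  set (u := fun m => Rpower (INR m + 1) (- p)).
  set (w := fun (i : nat) t => Rpower (INR t + 1) (- (INR i * p))).
  apply (boxsum_cvg j _ _ (K * (1 + 1 / (p - 1)) ^ j) Hg); intros N.
  apply (rboxsum_le_weighted j u (1 + 1 / (p - 1)) w).
  - intros m; left; apply exp_pos.
  - intros N'; apply rsum_Rpower_neg_le; auto.
  - intros i m t; unfold u, w.
    generalize (pos_INR m) (pos_INR t) (pos_INR i); intros Hm Ht Hi.
    rewrite S_INR, plus_INR.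
    replace (- ((INR i + 1) * p)) with (- p + - (INR i * p)) by ring.
    rewrite Rpower_plus.
    apply Rmult_le_compat; try (left; apply exp_pos);
      apply Rpower_le_l_nonpos; nra.
  - unfold w; simpl; rewrite Rplus_0_l, Rpower_1_l; lra.
  - exact HK.
  - intros t; apply Rmult_le_compat_l; auto; unfold w.
    rewrite Hz, pow1, Rmult_1_l.
    apply Rle_Rpower; [generalize (pos_INR t) | ]; lra.
Qed.

End Convergence.

Lemma Phi_partial_sums_cvg k j z s b :
  (1 <= k)%nat -> (j <= k)%nat -> (forall n : nat, b <> RtoC (- INR n)) ->
  (Cmod z < 1 \/ (Cmod z = 1 /\ Re s > INR k)) ->
  is_lim_Cseq (fun N => boxsum j N (hlerch_term z s b)) (Phi j z s b).
Proof.
  intros Hk Hj Hb Hz.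
  assert (Hl : exists l, is_lim_Cseq (fun N => boxsum j N (hlerch_term z s b)) l).
  { destruct Hz as [Hz | [Hz Hs]]; [apply boxsum_hlerch_cvg_disc; auto|].
    assert (HkR : 0 < INR k) by (apply lt_0_INR; lia).
    apply (boxsum_hlerch_cvg_circle z s b Hb j (Re s / INR k)); auto.
    - apply Rmult_lt_reg_r with (INR k); auto.
      unfold Rdiv; rewrite Rmult_assoc, Rinv_l; lra.
    - apply le_INR in Hj.
      apply Rle_trans with (INR k * (Re s / INR k)); [|right; field; lra].
      apply Rmult_le_compat_r; auto.
      apply Rdiv_le_0_compat; lra. }
  destruct Hl as [l Hl].
  unfold Phi; fold (hlerch_term z s b); rewrite (is_lim_Cseq_Clim _ _ Hl); exact Hl.
Qed.

Open Scope C_scope.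

Theorem theorem1p3 (k : nat) (z s a : C) :
  (1 <= k)%nat ->
  (forall n : nat, a <> RtoC (- INR n)) ->
  (Cmod z < 1 \/ (Cmod z = 1 /\ Re s > INR k))%R ->
  Phi k z s a =
    1 / Cpowc a s
    + csum k (fun r => RtoC (Binomial.C k r) * Cpow z (k - r)
                       * Phi (k - r) z s (a + RtoC (INR (k - r)))).
Proof.
  intros Hk Ha Hz.
  assert (Hshift : forall j n, a + RtoC (INR j) <> RtoC (- INR n)).
  { intros j n H; apply (Ha (n + j)%nat); rewrite plus_INR.
    apply injective_projections; simpl;
      [apply (f_equal fst) in H | apply (f_equal snd) in H]; simpl in H; lra. }
  apply is_lim_Cseq_Clim, is_lim_Cseq_incr_1.
  eapply is_lim_Cseq_ext; [intros N; symmetry; apply boxsum_hlerch_succ|].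
  apply is_lim_Cseq_plus; [apply is_lim_Cseq_const|].
  apply is_lim_Cseq_csum; intros r Hr.
  apply is_lim_Cseq_scal_l, (Phi_partial_sums_cvg k); auto; lia.
Qed.
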